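(* Let $A$ be an $n\times n$ affinity matrix of a graph with vertex set $V$, let $\mathcal{Q}\subseteq V$ be a constraint set, let $\alpha>0$, and let $I_{\mathcal{Q}}$ be the $n\times n$ diagonal matrix whose diagonal entries equal 1 for vertices in $V\setminus\mathcal{Q}$ and 0 otherwise. Consider the parametrized quadratic program: maximize $f_{\mathcal{Q}}^\alpha(\mathbf{x})=\mathbf{x}^\top(A-\alpha I_{\mathcal{Q}})\mathbf{x}$ subject to $\mathbf{x}\in\Delta=\{\mathbf{x}\in\mathbb{R}^n:\sum_i x_i=1,\ x_i\ge 0\}$. Given a distribution $\mathbf{x}\in\Delta$ with support $\sigma(\mathbf{x})=\{i\in V: x_i>0\}$, if $(A\mathbf{x})_i > \mathbf{x}^\top A\mathbf{x} - \alpha\, \mathbf{x}_{\mathcal{Q}}^\top \mathbf{x}_{\mathcal{Q}}$ for some $i\notin\sigma(\mathbf{x})$, then (1) $\mathbf{x}$ is not the maximizer of this parametrized quadratic program, and (2) the $i$-th unit vector $e_i$ is a dominant distribution for $\mathbf{x}$, where a distribution $\mathbf{y}\in\Delta$ is called a dominant distribution for $\mathbf{x}$ if $\mathbf{y}^\top(A-\alpha I_{\mathcal{Q}})\mathbf{x} > \mathbf{x}^\top(A-\alpha I_{\mathcal{Q}})\mathbf{x}$.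
   Context: Constrained dominant set clustering: local maximizers of the program above (with $\alpha$ larger than the largest eigenvalue of the principal submatrix of $A$ indexed by $V\setminus\mathcal{Q}$) have support intersecting $\mathcal{Q}$. The KKT conditions of the program state that $[(A-\alpha I_{\mathcal{Q}})\mathbf{x}]_i=\lambda/2$ for $i\in\sigma(\mathbf{x})$ and $\le\lambda/2$ for $i\notin\sigma(\mathbf{x})$. The term $\mathbf{x}_{\mathcal{Q}}^\top \mathbf{x}_{\mathcal{Q}}$ is the paper's notation for the quadratic penalty term $\mathbf{x}^\top I_{\mathcal{Q}}\mathbf{x}$. *)

From HB Require Import structures.
From mathcomp Require Import all_boot all_order all_algebra.
Set Implicit Arguments. Unset Strict Implicit. Unset Printing Implicit Defensive.
Import Order.TTheory GRing.Theory Num.Theory.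
Local Open Scope ring_scope.

Definition affinity_matrix (R : realFieldType) (n : nat) (A : 'M[R]_n) : Prop :=
  A^T = A /\ (forall i j, 0 <= A i j) /\ (forall i, A i i = 0).

Definition in_simplex (R : realFieldType) (n : nat) (x : 'cV[R]_n) : Prop :=
  \sum_(i < n) x i 0 = 1 /\ forall i, 0 <= x i 0.

Definition supp (R : realFieldType) (n : nat) (x : 'cV[R]_n) : {set 'I_n} :=
  [set i | 0 < x i 0].

Definition IQ (R : realFieldType) (n : nat) (Q : {set 'I_n}) : 'M[R]_n :=
  \matrix_(i, j) (if (i == j) && (i \notin Q) then 1 else 0).

Definition bform (R : realFieldType) (n : nat) (y : 'cV[R]_n) (M : 'M[R]_n)
  (x : 'cV[R]_n) : R := (y^T *m M *m x) 0 0.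

Definition fQ (R : realFieldType) (n : nat) (A : 'M[R]_n) (Q : {set 'I_n})
  (alpha : R) (x : 'cV[R]_n) : R := bform x (A - alpha *: IQ R Q) x.

Definition dominant_distribution (R : realFieldType) (n : nat) (A : 'M[R]_n)
  (Q : {set 'I_n}) (alpha : R) (y x : 'cV[R]_n) : Prop :=
  in_simplex y /\ bform y (A - alpha *: IQ R Q) x > bform x (A - alpha *: IQ R Q) x.

Definition is_maximizer (R : realFieldType) (n : nat) (A : 'M[R]_n)
  (Q : {set 'I_n}) (alpha : R) (x : 'cV[R]_n) : Prop :=
  in_simplex x /\ forall y, in_simplex y -> fQ A Q alpha y <= fQ A Q alpha x.

Definition unitv (R : realFieldType) (n : nat) (i : 'I_n) : 'cV[R]_n :=
  \col_j (if j == i then 1 else 0).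

(** Moving a little mass from [x] towards a distribution [y] changes the
    quadratic form [q(z) = z^T M z] (with [M = A - alpha I_Q] symmetric) by
    [2 t (y^T M x - q x) + O(t^2)].  Hence any dominant distribution [y]
    yields points of the simplex strictly better than [x].  When [x_i = 0]
    the penalty term does not see coordinate [i], so [e_i^T M x = (A x)_i]
    and the hypothesis says precisely that [e_i] is dominant for [x]. *)

From HB Require Import structures.
From mathcomp Require Import all_boot all_order all_algebra.
From mathcomp Require Import ring lra.
Set Implicit Arguments.
Unset Strict Implicit.
Unset Printing Implicit Defensive.

Import Order.TTheory GRing.Theory Num.Theory.
Local Open Scope ring_scope.

Section BilinearForm.
Variables (R : realFieldType) (n : nat).
Implicit Types (u v w : 'cV[R]_n) (M N : 'M[R]_n).

Lemma bformDl u v M w : bform (u + v) M w = bform u M w + bform v M w.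
Proof. by rewrite /bform linearD /= !mulmxDl mxE. Qed.

Lemma bformZl a u M w : bform (a *: u) M w = a * bform u M w.
Proof. by rewrite /bform linearZ /= -!scalemxAl mxE. Qed.

Lemma bformDr u v M w : bform w M (u + v) = bform w M u + bform w M v.
Proof. by rewrite /bform !mulmxDr mxE. Qed.

Lemma bformZr a u M w : bform w M (a *: u) = a * bform w M u.
Proof. by rewrite /bform -!scalemxAr mxE. Qed.

Lemma bformBZm a u M N w :
  bform u (M - a *: N) w = bform u M w - a * bform u N w.
Proof. by rewrite /bform mulmxBr mulmxBl -scalemxAr -scalemxAl !mxE. Qed.

Lemma bform_sym u M w : M^T = M -> bform u M w = bform w M u.
Proof.
move=> sM; rewrite /bform.
have -> (X : 'M[R]_1) : X 0 0 = X^T 0 0 by rewrite mxE.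
by rewrite !trmx_mul trmxK sM mulmxA.
Qed.

Lemma bform_unitvl i M w : bform (unitv R i) M w = (M *m w) i 0.
Proof.
rewrite /bform -mulmxA mxE (bigD1 i) //= big1 ?addr0.
  by rewrite !mxE eqxx mul1r.
by move=> j /negbTE ji; rewrite !mxE ji mul0r.
Qed.

Lemma bform_convex_comb t M u v : M^T = M ->
  let z := (1 - t) *: u + t *: v in
  bform z M z = bform u M u + 2 * t * (bform v M u - bform u M u)
                + t ^+ 2 * (bform u M u - 2 * bform v M u + bform v M v).
Proof.
move=> sM /=; rewrite !(bformDl, bformDr, bformZl, bformZr).
rewrite (bform_sym u v sM); ring.
Qed.

Lemma trmx_IQ (Q : {set 'I_n}) : (IQ R Q)^T = IQ R Q.
Proof. by apply/matrixP => j k; rewrite !mxE eq_sym; case: eqP => [->|]. Qed.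

Lemma mulmx_IQ (Q : {set 'I_n}) w i :
  (IQ R Q *m w) i 0 = if i \in Q then 0 else w i 0.
Proof.
rewrite mxE (bigD1 i) //= big1 ?addr0.
  by rewrite !mxE eqxx; case: (i \in Q); rewrite ?mul1r ?mul0r.
by move=> j /negbTE ji; rewrite !mxE eq_sym ji mul0r.
Qed.

End BilinearForm.

Section Simplex.
Variables (R : realFieldType) (n : nat).
Implicit Types (u v : 'cV[R]_n).

Lemma in_simplex_unitv (i : 'I_n) : in_simplex (unitv R i).
Proof.
split=> [|j]; last by rewrite mxE; case: eqP.
rewrite (bigD1 i) //= big1 ?addr0; first by rewrite mxE eqxx.
by move=> j /negbTE ji; rewrite mxE ji.
Qed.

Lemma in_simplex_convex_comb t u v : 0 <= t -> t <= 1 ->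
  in_simplex u -> in_simplex v -> in_simplex ((1 - t) *: u + t *: v).
Proof.
move=> t0 t1 [su u0] [sv v0]; split=> [|j].
  under eq_bigr => j _ do rewrite !mxE.
  by rewrite big_split /= -!mulr_sumr su sv; ring.
by rewrite !mxE addr_ge0 ?mulr_ge0 ?subr_ge0.
Qed.

Lemma notin_supp_eq0 u i : in_simplex u -> i \notin supp u -> u i 0 = 0.
Proof.
move=> [_ u0]; rewrite inE -leNgt => ui0.
by apply/eqP; rewrite eq_le ui0 u0.
Qed.

End Simplex.

Lemma quadratic_pos_near0 (R : realFieldType) (d c : R) : 0 < d ->
  exists2 t, 0 < t <= 1 & 0 < 2 * t * d + t ^+ 2 * c.
Proof.
move=> d0; have dc0 : 0 < d + `|c| by rewrite ltr_wpDr.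
(* With [t = d / (d + |c|)] we get [t |c| <= d], so [2 d + t c >= d > 0]. *)
pose t := d / (d + `|c|).
have tE : t * d + t * `|c| = d by rewrite -mulrDr mulfVK ?gt_eqF.
have t0 : 0 < t by rewrite divr_gt0.
have tc0 : 0 <= t * `|c| := mulr_ge0 (ltW t0) (normr_ge0 c).
have ctc : t * - `|c| <= t * c by apply: ler_wpM2l; [exact: ltW | exact: lerNnormlW].
by exists t; [rewrite t0 /=; nra | nra].
Qed.

Lemma dominant_distribution_not_maximizer (R : realFieldType) (n : nat)
    (A : 'M[R]_n) (Q : {set 'I_n}) (alpha : R) (x y : 'cV[R]_n) :
  A^T = A -> dominant_distribution A Q alpha y x -> ~ is_maximizer A Q alpha x.
Proof.
move=> sA [sy dom] [sx xmax]; set M := A - alpha *: IQ R Q.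
have sM : M^T = M by rewrite /M linearB linearZ /= sA trmx_IQ.
have [t /andP[t0 t1] gain] :=
  quadratic_pos_near0 (bform x M x - 2 * bform y M x + bform y M y)
    (etrans (subr_gt0 _ _) dom).
have := xmax _ (in_simplex_convex_comb (ltW t0) t1 sx sy).
by rewrite /fQ -/M bform_convex_comb //; lra.
Qed.

Theorem proposition1 (R : realFieldType) (n : nat) (A : 'M[R]_n)
  (Q : {set 'I_n}) (alpha : R) (x : 'cV[R]_n) (i : 'I_n) :
  affinity_matrix A -> 0 < alpha -> in_simplex x ->
  i \notin supp x ->
  (A *m x) i 0 > bform x A x - alpha * bform x (IQ R Q) x ->
  ~ is_maximizer A Q alpha x /\ dominant_distribution A Q alpha (unitv R i) x.
Proof.
move=> [sA _] _ sx isupp gain.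
have xi0 := notin_supp_eq0 sx isupp.
have dom : dominant_distribution A Q alpha (unitv R i) x.
  split; first exact: in_simplex_unitv.
  rewrite !bformBZm !bform_unitvl mulmx_IQ xi0.
  by case: (i \in Q); rewrite mulr0 subr0.
split=> //; exact: dominant_distribution_not_maximizer dom.
Qed.
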